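(* Let $X=\bigcup_{n\ge1}X_n$ be a positively graded set. The space $K[T_{\infty,X}]=\bigoplus_{n\ge1}K[T_{n,X}]$ of planar rooted trees with vertices coloured by $X$, with the operations $t\bullet_iw:=t\circ_iw$ (grafting), is a grafting algebra, and it is the free grafting algebra on $X$: for every grafting algebra $A$ and every map $\varphi:X\to A$ with $\varphi(X_n)\subseteq A_n$, there is a unique degree-preserving linear map $\Phi:K[T_{\infty,X}]\to A$ with $\Phi(t\circ_iw)=\Phi(t)\bullet_i\Phi(w)$ for all $t,w$ and $0\le i\le|w|$, and $\Phi(\mathfrak c_n,x)=\varphi(x)$ for $x\in X_n$. In particular the free grafting algebra on one generator of degree $1$ is spanned by planar binary rooted trees.
   Context: A preshuffle algebra is a graded vector space $A=\bigoplus_{n\ge0}A_n$ over a field $K$ with linear maps $\bullet_i:A_n\otimes A_m\to A_{n+m}$ for all $n,m\ge0$ and $0\le i\le m$, such that $(x\bullet_iy)\bullet_jz=x\bullet_{i+j}(y\bullet_jz)$ for all homogeneous $x,y,z$, $0\le i\le|y|$, $0\le j\le|z|$. A grafting algebra is a preshuffle algebra which moreover satisfies $x\bullet_i(y\bullet_jz)=y\bullet_{j+|x|}(x\bullet_iz)$ for all homogeneous $x,y,z$ and $0\le i<j\le|z|$. A planar rooted tree is a planar tree with a root, in which every internal vertex has at least two incoming edges and one outgoing edge; the leaves of a tree with $n+1$ leaves are numbered $0,\dots,n$ from left to right, and the tree has degree $n$ ($n\ge1$). $T_{n,X}$ is the set of planar rooted trees with $n+1$ leaves whose internal vertices are coloured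 by elements of $X$ so that a vertex with $k+1$ incoming edges is coloured by an element of $X_k$. For coloured trees $t,w$ and $0\le i\le|w|$, $t\circ_iw$ is the coloured tree obtained by attaching the root of $t$ to the $i$-th leaf of $w$; it has degree $|t|+|w|$. $(\mathfrak c_n,x)$ denotes the corolla with $n+1$ leaves and one vertex, coloured by $x\in X_n$. *)

From HB Require Import structures.
From mathcomp Require Import all_boot all_algebra.
From mathcomp.multinomials Require Import freeg.

Set Implicit Arguments.
Unset Strict Implicit.
Unset Printing Implicit Defensive.

Import GRing.Theory.
Local Open Scope ring_scope.

(* A family of products  x \bullet_i y  (x in A_n, y in A_m, result in
   A_{n+m}) is encoded as  op n m i x y.  Only 0 <= i <= m matters. *)
Definition bullet (K : fieldType) (A : nat -> lmodType K) :=
  forall n m : nat, nat -> A n -> A m -> A (n + m)%N.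

Definition bullet_bilinear (K : fieldType) (A : nat -> lmodType K)
    (op : bullet A) :=
  forall (n m i : nat), (i <= m)%N ->
    (forall (a : K) (x1 x2 : A n) (y : A m),
        op n m i (a *: x1 + x2) y = a *: op n m i x1 y + op n m i x2 y) /\
    (forall (a : K) (x : A n) (y1 y2 : A m),
        op n m i x (a *: y1 + y2) = a *: op n m i x y1 + op n m i x y2).

Definition preshuffle_axiom (K : fieldType) (A : nat -> lmodType K)
    (op : bullet A) :=
  forall (n m p : nat) (x : A n) (y : A m) (z : A p) (i j : nat),
    (i <= m)%N -> (j <= p)%N ->
    op (n + m)%N p j (op n m i x y) z
    = ecast k (A k) (addnA n m p) (op n (m + p)%N (i + j)%N x (op m p j y z)).

Definition grafting_axiom (K : fieldType) (A : nat -> lmodType K)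
    (op : bullet A) :=
  forall (n m p : nat) (x : A n) (y : A m) (z : A p) (i j : nat),
    (i < j)%N -> (j <= p)%N ->
    op n (m + p)%N i x (op m p j y z)
    = ecast k (A k) (addnCA m n p) (op m (n + p)%N (j + n)%N y (op n p i x z)).

Definition preshuffle_algebra (K : fieldType) (A : nat -> lmodType K)
    (op : bullet A) :=
  bullet_bilinear op /\ preshuffle_axiom op.

Definition grafting_algebra (K : fieldType) (A : nat -> lmodType K)
    (op : bullet A) :=
  preshuffle_algebra op /\ grafting_axiom op.

Definition is_linear (K : fieldType) (U V : lmodType K) (f : U -> V) :=
  forall (a : K) (u v : U), f (a *: u + v) = a *: f u + f v.

Section Trees.
(* X : positively graded set; X k is the set of colours for vertices
   with k+1 incoming edges.  X 0 is never used. *)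
Variable X : nat -> choiceType.

Definition colour := {k : nat & X k}.

(* Leaf = the trivial tree (a single edge);
   Node c ch = a root vertex coloured by c, whose incoming edges carry
   the subtrees ch, listed from left to right. *)
Inductive tree : Type :=
  | Leaf : tree
  | Node : colour -> seq tree -> tree.

Fixpoint leaves (t : tree) : nat :=
  match t with
  | Leaf => 1
  | Node _ ch => sumn (map leaves ch)
  end.

Fixpoint wf (t : tree) : bool :=
  match t with
  | Leaf => true
  | Node c ch => (0 < tag c)%N && (size ch == (tag c).+1) && all wf ch
  end.

Definition isnode (t : tree) : bool :=
  if t is Node _ _ then true else false.

(* t is a planar rooted X-coloured tree with n+1 leaves (degree n);
   the trivial tree is excluded, so T_0 is empty *)
Definition inT (n : nat) (t : tree) : bool :=
  [&& wf t, isnode t & leaves t == n.+1].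

(* t \circ_i w : graft the root of t onto the i-th leaf of w
   (leaves numbered from 0, left to right) *)
Fixpoint graft (t : tree) (i : nat) (w : tree) : tree :=
  match w with
  | Leaf => if i == 0%N then t else Leaf
  | Node c ch =>
      Node c ((fix gl (i : nat) (s : seq tree) : seq tree :=
                 match s with
                 | [::] => [::]
                 | u :: s' => if (i < leaves u)%N then graft t i u :: s'
                              else u :: gl (i - leaves u)%N s'
                 end) i ch)
  end.

Definition corolla (n : nat) (x : X n) : tree :=
  Node (Tagged X x) (nseq n.+1 Leaf).

Fixpoint binary (t : tree) : bool :=
  match t with
  | Leaf => true
  | Node _ ch => (size ch == 2) && all binary ch
  end.

Fixpoint enc (t : tree) : GenTree.tree (option colour) :=
  match t with
  | Leaf => GenTree.Leaf None
  | Node c ch => GenTree.Node 0 (GenTree.Leaf (Some c) :: map enc ch)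
  end.

Fixpoint dec (g : GenTree.tree (option colour)) : option tree :=
  match g with
  | GenTree.Leaf None => Some Leaf
  | GenTree.Node _ (GenTree.Leaf (Some c) :: gs) => Some (Node c (pmap dec gs))
  | _ => None
  end.

Fixpoint encK (t : tree) : dec (enc t) = Some t :=
  match t return dec (enc t) = Some t with
  | Leaf => erefl
  | Node c ch =>
      f_equal (fun s => Some (Node c s))
        ((fix F (s : seq tree) : pmap dec (map enc s) = s :=
            match s return pmap dec (map enc s) = s with
            | [::] => erefl
            | u :: s' =>
                @eq_ind_r _ (Some u)
                  (fun o => match o with Some y => y :: pmap dec (map enc s')
                                       | None => pmap dec (map enc s') end
                            = u :: s')
                  (f_equal (cons u) (F s')) (dec (enc u)) (encK u)
            end) ch)
  end.

HB.instance Definition _ := Choice.copy tree (pcan_type encK).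

Definition T (n : nat) := {t : tree | inT n t}.

End Trees.

Arguments Leaf {X}.

Section FreeGrafting.
Variables (K : fieldType) (X : nat -> choiceType).

Definition KT (n : nat) : lmodType K := {freeg (T X n) / K}.

Definition basis (n : nat) (t : T X n) : KT n := Freeg [:: ((1 : K), t)].

Definition tvec (n : nat) (t : tree X) : KT n :=
  match @insub _ _ (T X n) t with
  | Some s => basis s
  | None => 0
  end.

Definition graftKT : bullet KT :=
  fun n m i (x : KT n) (y : KT m) =>
    fglift (fun t : T X n =>
              fglift (fun w : T X m => tvec (n + m) (graft (val t) i (val w))) y) x.

End FreeGrafting.

Definition Xone (k : nat) : choiceType :=
  if k == 1%N then (unit : choiceType) else (void : choiceType).

Arguments KT K X n : clear implicits.
Arguments basis {K X n} t.
Arguments tvec K {X} n t.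
Arguments graftKT K X : clear implicits.
Arguments corolla {X n} x.

(* Grafting of trees satisfies the preshuffle identity and, for two distinct
   leaves, the grafting identity; both extend bilinearly to K[T_{oo,X}].
   Freeness: a tree whose root has colour c and subtrees s_0, ..., s_k equals
   s_0 \circ_0 (s_1 \circ_1 (... (s_k \circ_k (c_k, c)))), trivial subtrees
   being skipped, so a morphism is determined by its values on corollas.
   Conversely, evaluating this expression in A gives a morphism: grafting t
   into a leaf of some s_l is the preshuffle axiom, and grafting it into a leaf
   to the right of s_l needs the grafting axiom to move t past s_l.  With one
   generator of degree 1 every vertex has two incoming edges. *)

From HB Require Import structures.
From mathcomp Require Import all_boot all_algebra zify.
From mathcomp.multinomials Require Import freeg.
Import GRing.Theory.

Set Implicit Arguments.
Unset Strict Implicit.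
Unset Printing Implicit Defensive.

Section PlanarTrees.
Variable X : nat -> choiceType.
Implicit Types (s t u w : tree X) (ch vs : seq (tree X)) (c : colour X).

Fixpoint tree_nested_ind (P : tree X -> Prop) (PLeaf : P Leaf)
    (PNode : forall c ch, foldr (fun s acc => P s /\ acc) True ch -> P (Node c ch))
    t : P t :=
  match t with
  | Leaf => PLeaf
  | Node c ch => PNode c ch
      ((fix all_P ch : foldr (fun s acc => P s /\ acc) True ch :=
          match ch return foldr (fun s acc => P s /\ acc) True ch with
          | [::] => I
          | s :: ch' => conj (tree_nested_ind PLeaf PNode s) (all_P ch')
          end) ch)
  end.

(* [t] is a section variable so that [graft_forest t] is convertible with the
   local fixpoint in the definition of [graft]. *)
Section GraftForest.
Variable t : tree X.

Fixpoint graft_forest i ch : seq (tree X) :=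
  if ch is u :: ch' then
    if i < leaves u then graft t i u :: ch'
    else u :: graft_forest (i - leaves u) ch'
  else [::].

End GraftForest.

Lemma graft_forest_cons t i s ch :
  graft_forest t i (s :: ch) = if i < leaves s then graft t i s :: ch
                               else s :: graft_forest t (i - leaves s) ch.
Proof. by []. Qed.

Lemma graft_Node t i c ch : graft t i (Node c ch) = Node c (graft_forest t i ch).
Proof. reflexivity. Qed.

Lemma wf_Node c ch :
  wf (Node c ch) = (0 < tag c) && (size ch == (tag c).+1) && all (@wf X) ch.
Proof. by []. Qed.

Lemma size_graft_forest t i ch : size (graft_forest t i ch) = size ch.
Proof. by elim: ch i => //= u ch IH i; case: ifP => //= _; rewrite IH. Qed.

Lemma leaves_gt0 t : wf t -> 0 < leaves t.
Proof.
elim/tree_nested_ind: t => [|c ch IH] //= /andP[/andP[_ /eqP sz] wch].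
case: ch sz IH wch => [|s ch] //= _ [IHs _] /andP[ws _].
by rewrite addn_gt0 IHs.
Qed.

Lemma leaves_graft t i w : i < leaves w ->
  leaves (graft t i w) = leaves t + leaves w - 1.
Proof.
elim/tree_nested_ind: w i => [|c ch IH] i /=; first by case: i => // _; rewrite addnK.
elim: ch IH i => [|s ch IHch] //= [IHs IH] i lt_i.
by case: ifP => lt_is /=; [rewrite IHs // | rewrite IHch //]; lia.
Qed.

Lemma wf_graft t i w : wf t -> wf w -> wf (graft t i w).
Proof.
move=> wt; elim/tree_nested_ind: w i => [|c ch IH] i /=; first by case: (i == 0).
rewrite size_graft_forest => /andP[-> wch] /=.
elim: ch IH i wch => [|s ch IHch] //= [IHs IH] i /andP[ws wch].
by case: ifP => _ /=; rewrite ?IHs ?ws ?IHch.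
Qed.

Lemma graftA t u w i j : i < leaves u -> j < leaves w ->
  graft (graft t i u) j w = graft t (i + j) (graft u j w).
Proof.
move=> lt_i; elim/tree_nested_ind: w j => [|c ch IH] j.
  by case: j => //= _; rewrite addn0.
rewrite !graft_Node /= => lt_j; congr Node.
elim: ch IH j lt_j => [|s ch IHch] //= [IHs IH] j lt_j.
case: ifP => lt_js /=.
  by rewrite leaves_graft // ifT ?IHs //; lia.
rewrite ifF; last by lia.
by rewrite (IHch IH); [congr (_ :: graft_forest _ _ _) | ]; lia.
Qed.

Lemma graftC t u w i j : 0 < leaves t -> i < j -> j < leaves w ->
  graft t i (graft u j w) = graft u (j + leaves t - 1) (graft t i w).
Proof.
move=> lt_t; elim/tree_nested_ind: w i j => [|c ch IH] i j.
  by case: j => //; case: i.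
rewrite !graft_Node /= => lt_ij lt_j; congr Node.
elim: ch IH i j lt_ij lt_j => [|s ch IHch] //= [IHs IH] i j lt_ij lt_j.
case: (ltnP j (leaves s)) => lt_js /=.
  rewrite leaves_graft // ifT; last by lia.
  rewrite ifT /=; last by lia.
  by rewrite leaves_graft ?ifT ?IHs //; lia.
case: (ltnP i (leaves s)) => lt_is /=.
  by rewrite leaves_graft // ifF; [congr (_ :: graft_forest _ _ _) |]; lia.
rewrite ifF; last by lia.
by rewrite (IHch IH); [congr (_ :: graft_forest _ _ _) | |]; lia.
Qed.

Lemma inT_leaves n t : inT n t -> leaves t = n.+1.
Proof. by case/and3P=> _ _ /eqP. Qed.

Lemma inT_predn_leaves t : wf t -> isnode t -> inT (leaves t).-1 t.
Proof. by move=> wt nt; rewrite /inT wt nt prednK ?eqxx ?leaves_gt0. Qed.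

Lemma inT_graft n m i t w : inT n t -> inT m w -> i <= m ->
  inT (n + m) (graft t i w).
Proof.
case/and3P=> wt nt /eqP lt /and3P[ww nw /eqP lw] le_im.
rewrite /inT wf_graft // leaves_graft ?lt ?lw; last by lia.
have -> : isnode (graft t i w) by case: w nw {ww lw}.
by apply/eqP; lia.
Qed.

Lemma leaves_ncons j vs :
  sumn (map (@leaves X) (ncons j Leaf vs)) = j + sumn (map (@leaves X) vs).
Proof. by elim: j => //= j ->. Qed.

Lemma graft_forest_ncons s j vs :
  graft_forest s j (ncons j.+1 Leaf vs) = ncons j Leaf (s :: vs).
Proof. by elim: j => //= j <-; rewrite subn1. Qed.

Lemma Node_ncons_graft c j s vs :
  Node c (ncons j Leaf (s :: vs)) = graft s j (Node c (ncons j.+1 Leaf vs)).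
Proof. by rewrite graft_Node graft_forest_ncons. Qed.

Lemma inT_Node_ncons_graft c j s vs d : isnode s ->
  inT d (Node c (ncons j Leaf (s :: vs))) ->
  let r := Node c (ncons j.+1 Leaf vs) in
  [/\ inT (leaves s).-1 s, inT (leaves r).-1 r, j <= (leaves r).-1
    & d = (leaves s).-1 + (leaves r).-1].
Proof.
move=> ns /and3P[/andP[/andP[c_gt0 /eqP sz] wch] _ /eqP lv] r.
move: wch; rewrite -cat_nseq all_cat => /andP[_ /andP[ws wvs]].
have {}wvs : all (@wf X) vs := wvs.
have ls_gt0 := leaves_gt0 ws.
have lr : leaves r = j.+1 + sumn (map (@leaves X) vs) by rewrite /= leaves_ncons.
have {}lv : j + (leaves s + sumn (map (@leaves X) vs)) = d.+1.
  by rewrite -lv /= leaves_ncons.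
split; [exact: inT_predn_leaves | | rewrite lr; lia..].
apply: inT_predn_leaves => //; rewrite wf_Node c_gt0 size_ncons -sz size_ncons addSnnS eqxx.
by rewrite -cat_nseq all_cat all_nseq orbT wvs.
Qed.

Lemma inT_Node_nseq c j d : inT d (Node c (nseq j Leaf)) ->
  exists2 x : X d, 0 < d & Node c (nseq j Leaf) = corolla x.
Proof.
case: c => k x /and3P[/andP[/andP[/= k_gt0 /eqP sz] _] _ /eqP].
rewrite /= /nseq leaves_ncons addn0 => jd; move: sz; rewrite size_ncons addn0 => jk.
have ->: d = k by move: jd jk => -> [].
by exists x; rewrite // /corolla -jk jd.
Qed.

Lemma inT_corolla n (x : X n) : 0 < n -> inT n (corolla x).
Proof.
move=> n_gt0; rewrite /inT /= size_nseq eqxx n_gt0 all_nseq orbT.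
by rewrite /nseq leaves_ncons addn0 eqxx.
Qed.

End PlanarTrees.

Section FreeModule.
Local Open Scope ring_scope.
Variable K : fieldType.
Implicit Types V : lmodType K.

Section LinearMaps.
Variables (V W : lmodType K) (f : V -> W).
Hypothesis f_lin : is_linear f.

Lemma is_linear0 : f 0 = 0.
Proof.
have := f_lin 1 0 0; rewrite !scale1r addr0 => f0D.
by apply: (addrI (f 0)); rewrite -f0D addr0.
Qed.

Lemma is_linearD x y : f (x + y) = f x + f y.
Proof. by have := f_lin 1 x y; rewrite !scale1r. Qed.

Lemma is_linearZ a x : f (a *: x) = a *: f x.
Proof. by rewrite -[a *: x]addr0 f_lin is_linear0 addr0. Qed.

Lemma is_linear_sum (I : Type) (r : seq I) (F : I -> V) :
  f (\sum_(i <- r) F i) = \sum_(i <- r) f (F i).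
Proof. by elim: r => [|i r IH]; rewrite ?big_nil ?is_linear0 // !big_cons is_linearD IH. Qed.

End LinearMaps.

Lemma ecast_linearP (A : nat -> lmodType K) n n' (e : n = n') a (u v : A n) :
  ecast k (A k) e (a *: u + v) = a *: ecast k (A k) e u + ecast k (A k) e v.
Proof. by case: n' / e. Qed.

Section Freeg.
Variable T : choiceType.
Implicit Types x y : {freeg T / K}.

Lemma freegZU (a k : K) (z : T) : a *: << k *g z >> = << (a * k) *g z >> :> {freeg T / K}.
Proof. by apply/eqP/freeg_eqP => y; rewrite coeffZ !coeffU mulrA. Qed.

Lemma freegUZ (k : K) (z : T) : << k *g z >> = k *: << z >> :> {freeg T / K}.
Proof. by rewrite freegZU mulr1. Qed.

Lemma is_linear_freeg_ext V (f g : {freeg T / K} -> V) :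
  is_linear f -> is_linear g -> (forall z, f << z >> = g << z >>) -> f =1 g.
Proof.
move=> f_lin g_lin fg x; rewrite -[x]freeg_sumE !is_linear_sum //.
by apply: eq_bigr => z _; rewrite freegUZ !is_linearZ ?fg.
Qed.

Section Lift.
Variables (V : lmodType K) (f : T -> V).

HB.instance Definition _ :=
  GRing.isZmodMorphism.Build {freeg T / K} V (fglift f) (lift_is_additive f).

Lemma fgliftZ a x : fglift f (a *: x) = a *: fglift f x.
Proof.
rewrite -[x]freeg_sumE (@scaler_sumr K {freeg T / K}) !raddf_sum.
by apply: eq_bigr => z _ /=; rewrite freegZU !liftU scalerA.
Qed.

HB.instance Definition _ :=
  GRing.isScalable.Build K {freeg T / K} V *:%R (fglift f) fgliftZ.

Lemma fglift_is_linear : is_linear (fglift f).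
Proof. by move=> a x y; rewrite linearP. Qed.

Lemma fglift_basis z : fglift f << z >> = f z.
Proof. by rewrite liftU scale1r. Qed.

End Lift.

Lemma eq_fglift V (f g : T -> V) : f =1 g -> fglift f =1 fglift g.
Proof.
move=> fg x; rewrite -[x]freeg_sumE !raddf_sum.
by apply: eq_bigr => z _ /=; rewrite !liftU fg.
Qed.

Lemma fglift_linear_in_fun V (a : K) (f g : T -> V) x :
  fglift (fun z => a *: f z + g z) x = a *: fglift f x + fglift g x.
Proof.
rewrite -[x]freeg_sumE !raddf_sum -big_split.
by apply: eq_bigr => z _ /=; rewrite !liftU scalerDr !scalerA mulrC.
Qed.

End Freeg.

Lemma freeg_trilinear_ext (T1 T2 T3 : choiceType) V
    (F G : {freeg T1 / K} -> {freeg T2 / K} -> {freeg T3 / K} -> V) :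
  (forall y z, is_linear (fun x => F x y z)) -> (forall y z, is_linear (fun x => G x y z)) ->
  (forall x z, is_linear (fun y => F x y z)) -> (forall x z, is_linear (fun y => G x y z)) ->
  (forall x y, is_linear (F x y)) -> (forall x y, is_linear (G x y)) ->
  (forall t u w, F << t >> << u >> << w >> = G << t >> << u >> << w >>) ->
  forall x y z, F x y z = G x y z.
Proof.
move=> F1 G1 F2 G2 F3 G3 FG x y z.
apply: (is_linear_freeg_ext (F1 y z) (G1 y z)) => t {x}.
apply: (is_linear_freeg_ext (F2 _ z) (G2 _ z)) => u {y}.
exact: (is_linear_freeg_ext (F3 _ _) (G3 _ _)).
Qed.

End FreeModule.

Section GraftingAlgebraOfTrees.
Local Open Scope ring_scope.
Variables (K : fieldType) (X : nat -> choiceType).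
Local Notation KT := (KT K X).
Local Notation graftKT := (graftKT K X).

Lemma tvec_in n (s : tree X) (sT : inT n s) : tvec K n s = basis (exist _ s sT).
Proof.
rewrite /tvec; case: insubP => [u _ su|]; last by rewrite sT.
by congr basis; apply: val_inj.
Qed.

Lemma tvecE n (t : T X n) : tvec K n (val t) = basis t.
Proof. by rewrite /tvec valK. Qed.

Lemma ecast_tvec n n' (e : n = n') (s : tree X) :
  ecast k (KT k) e (tvec K n s) = tvec K n' s.
Proof. by case: n' / e. Qed.

Lemma graftKT_basis n m i (t : T X n) (w : T X m) :
  graftKT n m i (basis t) (basis w) = tvec K (n + m) (graft (val t) i (val w)).
Proof. by rewrite /graftKT !fglift_basis. Qed.

Lemma graftKT_linearPl n m i a (x1 x2 : KT n) (y : KT m) :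
  graftKT n m i (a *: x1 + x2) y = a *: graftKT n m i x1 y + graftKT n m i x2 y.
Proof. exact: fglift_is_linear. Qed.

Lemma graftKT_linearPr n m i a (x : KT n) (y1 y2 : KT m) :
  graftKT n m i x (a *: y1 + y2) = a *: graftKT n m i x y1 + graftKT n m i x y2.
Proof.
rewrite /graftKT -fglift_linear_in_fun.
by apply: eq_fglift => t; apply: fglift_is_linear.
Qed.

Lemma graftKT_bilinear : bullet_bilinear graftKT.
Proof. by move=> n m i _; split=> *; rewrite (graftKT_linearPl, graftKT_linearPr). Qed.

Lemma graftKT_preshuffle : preshuffle_axiom graftKT.
Proof.
move=> n m p x y z i j le_im le_jp; move: x y z.
apply: freeg_trilinear_ext => [y z|y z|x z|x z|x y|x y|t u w] /=;
  try by move=> a v1 v2; rewrite ?(graftKT_linearPl, graftKT_linearPr, ecast_linearP).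
have tT := valP t; have uT := valP u; have wT := valP w.
rewrite graftKT_basis (tvec_in (inT_graft tT uT le_im)) graftKT_basis /=.
rewrite graftKT_basis (tvec_in (inT_graft uT wT le_jp)) graftKT_basis /=.
by rewrite ecast_tvec graftA // (inT_leaves uT, inT_leaves wT).
Qed.

Lemma graftKT_grafting : grafting_axiom graftKT.
Proof.
move=> n m p x y z i j lt_ij le_jp; move: x y z.
apply: freeg_trilinear_ext => [y z|y z|x z|x z|x y|x y|t u w] /=;
  try by move=> a v1 v2; rewrite ?(graftKT_linearPl, graftKT_linearPr, ecast_linearP).
have tT := valP t; have uT := valP u; have wT := valP w.
have le_ip := ltnW (leq_trans lt_ij le_jp).
rewrite graftKT_basis (tvec_in (inT_graft uT wT le_jp)) graftKT_basis /=.
rewrite graftKT_basis (tvec_in (inT_graft tT wT le_ip)) graftKT_basis /=.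
rewrite ecast_tvec graftC ?(inT_leaves tT, inT_leaves wT) //.
by rewrite addnS subn1.
Qed.

Lemma graftKT_grafting_algebra : grafting_algebra graftKT.
Proof.
by split; [split|]; [exact: graftKT_bilinear | exact: graftKT_preshuffle | exact: graftKT_grafting].
Qed.

End GraftingAlgebraOfTrees.

Section UniversalProperty.
Variables (K : fieldType) (X : nat -> choiceType) (A : nat -> lmodType K).
Variables (op : bullet A) (phi : forall n, X n -> A n).

Definition graft_morphism (Psi : forall n, KT K X n -> A n) :=
  forall n m i (t : T X n) (w : T X m), i <= m ->
    Psi (n + m) (tvec K (n + m) (graft (val t) i (val w)))
    = op i (Psi n (basis t)) (Psi m (basis w)).

Definition extends_phi (Psi : forall n, KT K X n -> A n) :=
  forall n (x : X n), 0 < n -> Psi n (tvec K n (corolla x)) = phi x.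

Lemma graft_morphism_tvec Psi : graft_morphism Psi ->
  forall n m i s u, inT n s -> inT m u -> i <= m ->
  Psi (n + m) (tvec K (n + m) (graft s i u))
  = op i (Psi n (tvec K n s)) (Psi m (tvec K m u)).
Proof.
move=> Psi_graft n m i s u sT uT le_im.
rewrite (tvec_in K sT) (tvec_in K uT).
exact: (Psi_graft _ _ _ (exist _ s sT) (exist _ u uT)).
Qed.

Section Uniqueness.
Variables Psi1 Psi2 : forall n, KT K X n -> A n.
Hypotheses (Psi1_graft : graft_morphism Psi1) (Psi2_graft : graft_morphism Psi2).
Hypotheses (Psi1_phi : extends_phi Psi1) (Psi2_phi : extends_phi Psi2).

Let agree t := forall d, inT d t -> Psi1 (tvec K d t) = Psi2 (tvec K d t).

Lemma agree_Node_ncons c vs j :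
  foldr (fun s acc => agree s /\ acc) True vs -> agree (Node c (ncons j Leaf vs)).
Proof.
elim: vs j => [|s vs IHvs] j /=.
  by move=> _ d /inT_Node_nseq[x d_gt0 ->]; rewrite Psi1_phi // Psi2_phi.
case: s => [|c' ch'] [IHs IH]; first by rewrite /ncons -iterSr; apply: IHvs.
move=> d /inT_Node_ncons_graft[//| sT rT le_j ->].
rewrite Node_ncons_graft !(graft_morphism_tvec _ sT rT le_j) //.
by rewrite IHs // (IHvs _ IH).
Qed.

Lemma agree_trees t : agree t.
Proof.
elim/tree_nested_ind: t => [d|c ch IH]; first by rewrite /inT andbF.
exact: (@agree_Node_ncons c ch 0 IH).
Qed.

Lemma eq_graft_morphisms :
  (forall n, is_linear (@Psi1 n)) -> (forall n, is_linear (@Psi2 n)) ->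
  forall n (v : KT K X n), Psi1 v = Psi2 v.
Proof.
move=> Psi1_lin Psi2_lin n; apply: (is_linear_freeg_ext (Psi1_lin n) (Psi2_lin n)) => t.
by rewrite -[<< t >>]/(basis t) -(tvecE K) agree_trees ?(valP t).
Qed.

End Uniqueness.

Section Existence.
Hypotheses (op_preshuffle : preshuffle_axiom op) (op_grafting : grafting_axiom op).

(* Working in the total space of the grading turns both axioms into plain
   equations, with no casts along degree equalities. *)
Local Notation Atot := {d : nat & A d}.

Definition tbullet (x y : Atot) i : Atot := Tagged A (op i (tagged x) (tagged y)).

Lemma Tagged_ecast n n' (e : n = n') (v : A n) : Tagged A (ecast k (A k) e v) = Tagged A v.
Proof. by case: n' / e. Qed.

Lemma tbulletA x y z i j : i <= tag y -> j <= tag z ->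
  tbullet (tbullet x y i) z j = tbullet x (tbullet y z j) (i + j).
Proof.
by case: x y z => [n x] [m y] [p z] le_i le_j; rewrite /tbullet /= op_preshuffle // Tagged_ecast.
Qed.

Lemma tbulletC x y z i j : i < j -> j <= tag z ->
  tbullet x (tbullet y z j) i = tbullet y (tbullet x z i) (j + tag x).
Proof.
by case: x y z => [n x] [m y] [p z] lt_ij le_j; rewrite /tbullet /= op_grafting // Tagged_ecast.
Qed.

Definition component n (x : Atot) : A n :=
  if tag x =P n is ReflectT e then ecast k (A k) e (tagged x) else 0%R.

Lemma component_Tagged n (v : A n) : component n (Tagged A v) = v.
Proof. by rewrite /component; case: eqP => // e; rewrite eq_axiomK. Qed.

Lemma component_tbullet x y n m i : tag x = n -> tag y = m ->
  component (n + m) (tbullet x y i) = op i (component n x) (component m y).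
Proof. by case: x y => [n' x] [m' y] /= <- <-; rewrite !component_Tagged. Qed.

Fixpoint fold_tbullet j (vs : seq (option Atot)) (b : Atot) : Atot :=
  if vs is o :: vs' then
    let r := fold_tbullet j.+1 vs' b in if o is Some x then tbullet x r j else r
  else b.

Definition vertex_value (c : colour X) : Atot := Tagged A (phi (tagged c)).

(* eval (Node c [:: s_0; ...; s_k]) =
     eval s_0 \bullet_0 (eval s_1 \bullet_1 (... (eval s_k \bullet_k phi c))),
   the factors of the leaves s_l = Leaf being omitted. *)
Fixpoint eval t : Atot :=
  match t with
  | Leaf => Tagged A (0 : A 0)%R
  | Node c ch =>
      fold_tbullet 0 (map (fun s => if isnode s then Some (eval s) else None) ch)
        (vertex_value c)
  end.

Definition eval_opt s := if isnode s then Some (eval s) else None.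

Lemma eval_Node c ch : eval (Node c ch) = fold_tbullet 0 (map eval_opt ch) (vertex_value c).
Proof. by []. Qed.

Lemma eval_opt_node s : isnode s -> eval_opt s = Some (eval s).
Proof. by rewrite /eval_opt => ->. Qed.

Lemma fold_tbullet_eval_node j s ch b : isnode s ->
  fold_tbullet j (map eval_opt (s :: ch)) b
  = tbullet (eval s) (fold_tbullet j.+1 (map eval_opt ch) b) j.
Proof. by move=> ns; rewrite /= eval_opt_node. Qed.

Lemma fold_tbullet_eval_Leaf j ch b :
  fold_tbullet j (map eval_opt (Leaf :: ch)) b = fold_tbullet j.+1 (map eval_opt ch) b.
Proof. by []. Qed.

Lemma fold_tbullet_eval_nseq j k b : fold_tbullet j (map eval_opt (nseq k Leaf)) b = b.
Proof. by elim: k j => //= k IH j; rewrite IH. Qed.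

Definition odegree (o : option Atot) := if o is Some x then tag x else 0.

Lemma tag_fold_tbullet j vs b : tag (fold_tbullet j vs b) = tag b + sumn (map odegree vs).
Proof. by elim: vs j => [|[x|] vs IH] j /=; rewrite ?addn0 ?IH // addnCA. Qed.

Lemma odegree_eval_opt s : wf s -> (odegree (eval_opt s)).+1 = leaves s.
Proof.
elim/tree_nested_ind: s => [|c ch IH] //; rewrite wf_Node => /andP[/andP[_ /eqP sz] wch].
rewrite eval_opt_node // eval_Node /= tag_fold_tbullet /=.
suff: sumn (map odegree (map eval_opt ch)) + size ch = sumn (map (@leaves X) ch).
  by rewrite sz; lia.
elim: ch IH wch {sz} => [|s ch IHch] //= [IHs IH] /andP[ws wch].
by rewrite -(IHch IH wch) -(IHs ws); lia.
Qed.

Lemma tag_eval t : wf t -> isnode t -> tag (eval t) = (leaves t).-1.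
Proof. by move=> wt nt; rewrite -(odegree_eval_opt wt) eval_opt_node. Qed.

Lemma tag_fold_eval j ch b : all (@wf X) ch ->
  tag (fold_tbullet j (map eval_opt ch) b) + size ch = tag b + sumn (map (@leaves X) ch).
Proof.
rewrite tag_fold_tbullet -addnA => wch; congr (_ + _).
elim: ch wch => //= s ch IH /andP[ws wch].
by rewrite -(odegree_eval_opt ws) -IH //; lia.
Qed.

Section EvalGraft.
Variable t : tree X.
Hypothesis nt : isnode t.

Let eval_graft_at w := wf w -> isnode w -> forall i, i < leaves w ->
  eval (graft t i w) = tbullet (eval t) (eval w) i.

Lemma fold_tbullet_graft_forest ch j b i :
  foldr (fun s acc => eval_graft_at s /\ acc) True ch -> all (@wf X) ch ->
  j + size ch <= (tag b).+1 -> i < sumn (map (@leaves X) ch) ->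
  fold_tbullet j (map eval_opt (graft_forest t i ch)) b
  = tbullet (eval t) (fold_tbullet j (map eval_opt ch) b) (j + i).
Proof.
elim: ch j i => [|s ch IHch] // j i [IHs IH] /andP[ws wch] le_sz lt_i.
have {le_sz lt_i} [le_sz lt_i] : j + (size ch).+1 <= (tag b).+1
    /\ i < leaves s + sumn (map (@leaves X) ch) by [].
have tag_r := tag_fold_eval j.+1 b wch.
rewrite graft_forest_cons; case: ifP => lt_is; case: s IHs ws lt_is lt_i => [|c' ch'] IHs ws lt_is lt_i.
- by case: i lt_is {lt_i} => // _; rewrite fold_tbullet_eval_Leaf fold_tbullet_eval_node // addn0.
- rewrite !fold_tbullet_eval_node // IHs // tbulletA ?tag_eval ?(addnC i) //; lia.
- rewrite !fold_tbullet_eval_Leaf IHch //; [|lia..].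
  by congr tbullet; move: lt_is => /= /negbT; lia.
- rewrite !fold_tbullet_eval_node // IHch //; [|lia..].
  have ls_gt0 := leaves_gt0 ws.
  rewrite tbulletC ?tag_eval //; [|lia..].
  by congr tbullet; lia.
Qed.

Lemma eval_graft w : eval_graft_at w.
Proof.
elim/tree_nested_ind: w => [|c ch IH] // /andP[/andP[_ /eqP sz] wch] _ i lt_i.
by rewrite graft_Node !eval_Node fold_tbullet_graft_forest // sz.
Qed.

End EvalGraft.

Definition extension n (v : KT K X n) : A n :=
  fglift (fun s : T X n => component n (eval (val s))) v.

Lemma extension_is_linear n : is_linear (@extension n).
Proof. exact: fglift_is_linear. Qed.

Lemma extension_tvec n s (sT : inT n s) : extension (tvec K n s) = component n (eval s).
Proof. by rewrite (tvec_in K sT) /extension fglift_basis. Qed.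

Lemma extension_graft_morphism : graft_morphism extension.
Proof.
move=> n m i t w le_im; have tT := valP t; have wT := valP w.
rewrite -!(tvecE K) !extension_tvec ?inT_graft //.
have [wt nt _] := and3P tT; have [ww nw _] := and3P wT.
rewrite eval_graft ?(inT_leaves wT) // component_tbullet // tag_eval //.
  by rewrite (inT_leaves tT).
by rewrite (inT_leaves wT).
Qed.

Lemma extension_extends_phi : extends_phi extension.
Proof.
move=> n x n_gt0; rewrite extension_tvec ?inT_corolla //.
by rewrite eval_Node fold_tbullet_eval_nseq component_Tagged.
Qed.

End Existence.

End UniversalProperty.

Lemma tag_Xone (c : colour Xone) : tag c = 1.
Proof. by case: c => k /=; rewrite /Xone; case: eqP => // _ []. Qed.

Lemma wf_Xone (t : tree Xone) : wf t = binary t.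
Proof.
elim/tree_nested_ind: t => [|c ch IH] //=; rewrite tag_Xone /=; congr andb.
by elim: ch IH => //= s ch IHch [-> /IHch ->].
Qed.

Theorem mainTheorem16 (K : fieldType) (X : nat -> choiceType) :
  grafting_algebra (graftKT K X)
  /\
  (forall (A : nat -> lmodType K) (op : bullet A),
     grafting_algebra op ->
     forall phi : forall n : nat, X n -> A n,
     exists Phi : forall n : nat, KT K X n -> A n,
       ((forall n, is_linear (Phi n)) /\
        (forall (n m i : nat) (t : T X n) (w : T X m), (i <= m)%N ->
           Phi (n + m)%N (tvec K (n + m)%N (graft (val t) i (val w)))
           = op n m i (Phi n (basis t)) (Phi m (basis w))) /\
        (forall (n : nat) (x : X n), (1 <= n)%N ->
           Phi n (tvec K n (corolla x)) = phi n x))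
       /\
       (forall Psi : forall n : nat, KT K X n -> A n,
          (forall n, is_linear (Psi n)) ->
          (forall (n m i : nat) (t : T X n) (w : T X m), (i <= m)%N ->
             Psi (n + m)%N (tvec K (n + m)%N (graft (val t) i (val w)))
             = op n m i (Psi n (basis t)) (Psi m (basis w))) ->
          (forall (n : nat) (x : X n), (1 <= n)%N ->
             Psi n (tvec K n (corolla x)) = phi n x) ->
          forall (n : nat) (v : KT K X n), Psi n v = Phi n v))
  /\
  (forall (n : nat) (t : tree Xone),
     inT n t = [&& binary t, isnode t & leaves t == n.+1]).
Proof.
split; first exact: graftKT_grafting_algebra.
split=> [A op [[_ op_preshuffle] op_grafting] phi | n t]; last by rewrite /inT wf_Xone.
exists (extension op phi); split.
  split; first exact: extension_is_linear.
  by split; [exact: extension_graft_morphism | exact: extension_extends_phi].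
move=> Psi Psi_lin Psi_graft Psi_phi n v.
apply: (eq_graft_morphisms Psi_graft _ Psi_phi _ Psi_lin) => //.
- exact: extension_graft_morphism.
- exact: extension_extends_phi.
- exact: extension_is_linear.
Qed.
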